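(* For each $n\geq 1$: (i) up to isomorphism there are exactly two anti-regular graphs with loops on $n$ vertices, denoted $G_n$ and $H_n$; (ii) $G_n$ and $H_n$ are complements of each other (as graphs with loops), one of them is connected and the other is disconnected; (iii) if $G_n$ denotes the connected one, then $d(G_n)=(1,2,\ldots,n)$ and $d(H_n)=(0,1,\ldots,n-1)$; (iv) both $G_n$ and $H_n$ are threshold graphs with loops whose binary creation sequences are alternating (consecutive bits differ); (v) the binary sequence of $G_n$ begins with $n \bmod 2$; (vi) the binary sequence of $H_n$ begins with $(n+1)\bmod 2$ and is obtained from the binary sequence of $G_n$ by flipping every bit.
   Context: A graph with loops is a pair $G=(V,E)$ with $V$ finite and $E$ a set of 2-element multisets $\{u,v\}$ of $V$ ($u=v$ allowed, giving a loop; at most one loop per vertex, no multiple edges). The degree of a vertex is the number of edges containing it, a loop counted once; $d(G)$ denotes the degree sequence in non-decreasing order. $G$ is an anti-regular graph with loops if all its vertex degrees are distinct. The complement of a graph with loops $G=(V,E)$ is the graph with loops on $V$ whose edge set consists of exactly those multisets $\{u,v\}$ (including $u=v$) not in $E$. Threshold graph with loops from a binary sequence $b=(b_1,\ldots,b_n)\in\{0,1\}^n$: start with a vertex $v_1$, with a loop iff $b_1=1$; for $k=1,\ldots,n-1$, add vertex $v_{k+1}$ and, iff $b_{k+1}=1$, join $v_{k+1}$ to all of $v_1,\ldots,v_{k+1}$ (including a loop at $v_{k+1}$); if $b_{k+1}=0$, $v_{k+1}$ is added with no edges. A graph with loops is a threshold graph with loops iff it is isomorphic to one obtained this way, and $b$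 is then its binary sequence. *)

(* A graph with loops on 'I_n is a symmetric e : rel 'I_n; e x x = loop at x. *)
From mathcomp Require Import all_boot.
Set Implicit Arguments. Unset Strict Implicit. Unset Printing Implicit Defensive.


(* degree: number of edges containing x, loop counted once
   = number of y (possibly y = x) with e x y *)
Definition ldeg (n : nat) (e : rel 'I_n) (x : 'I_n) : nat := #|[pred y | e x y]|.

Definition degseq (n : nat) (e : rel 'I_n) : seq nat :=
  sort leq [seq ldeg e x | x <- enum 'I_n].

Definition antiregular (n : nat) (e : rel 'I_n) : Prop := injective (ldeg e).

Definition lcompl (n : nat) (e : rel 'I_n) : rel 'I_n := fun x y => ~~ e x y.

Definition liso (n : nat) (e1 e2 : rel 'I_n) : Prop :=
  exists f : 'I_n -> 'I_n, bijective f /\ forall x y, e1 x y = e2 (f x) (f y).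

Definition lconnected (n : nat) (e : rel 'I_n) : Prop :=
  forall x y : 'I_n, connect e x y.

(* Threshold graph with loops from b = (b_1,...,b_n), 0-indexed here:
   vertex i (i.e. v_{i+1}); for i <= j, {v_i, v_j} is an edge iff b_j = 1. *)
Definition thr (n : nat) (b : n.-tuple bool) : rel 'I_n :=
  fun x y => tnth b (if x <= y then y else x).

Definition alternating (b : seq bool) : Prop :=
  forall i, i.+1 < size b -> nth false b i != nth false b i.+1.

From mathcomp Require Import all_boot.
From mathcomp Require Import zify.
Set Implicit Arguments. Unset Strict Implicit. Unset Printing Implicit Defensive.

(** An anti-regular graph with loops on n vertices has degrees exactly
    1, ..., n or 0, ..., n-1; in the first case adjacency is forced to be
    [x ~ y <-> n < d x + d y], by peeling off the vertex of degree n
    (adjacent to everything), then that of degree 1 (adjacent to it alone),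
    then that of degree n-1, and so on.  The second case is the complement of
    the first.  In a threshold representation equal consecutive bits would
    give two vertices of equal degree, so the bits alternate, and the last
    bit is read off the degree (n or 0) of the last vertex. *)

Lemma card_count (T : finType) (P : pred T) : #|[pred x | P x]| = count P (enum T).
Proof.
rewrite -size_filter -(card_uniqP (filter_uniq P (enum_uniq T))).
by apply: eq_card => x; rewrite inE mem_filter mem_enum andbT.
Qed.

Lemma count_gt_iota1 j k : count (fun m => j < m) (iota 1 k) = k - j.
Proof. elim: k => [|k IHk] //; rewrite -[k.+1]addn1 iotaD count_cat IHk /=; lia. Qed.

Lemma perm_eq_injective_iota (T : finType) (d : T -> nat) a :
  injective d -> (forall x, a <= d x < a + #|T|) ->
  perm_eq [seq d x | x <- enum T] (iota a #|T|).
Proof.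
move=> d_inj d_range.
have d_uniq : uniq [seq d x | x <- enum T] by rewrite (map_inj_uniq d_inj) enum_uniq.
have d_sub : {subset [seq d x | x <- enum T] <= iota a #|T|}.
  by move=> m /mapP [x _ ->]; rewrite mem_iota d_range.
apply: uniq_perm; rewrite ?iota_uniq //.
by apply: (uniq_min_size d_uniq d_sub _).2; rewrite size_map size_iota cardT.
Qed.

Lemma card_gt_injective (T : finType) (d : T -> nat) j :
  injective d -> (forall x, 0 < d x <= #|T|) -> #|[pred x | j < d x]| = #|T| - j.
Proof.
move=> d_inj d_range.
have d_perm : perm_eq [seq d x | x <- enum T] (iota 1 #|T|).
  apply: perm_eq_injective_iota => // x; have := d_range x; lia.
by rewrite -count_gt_iota1 -(permP d_perm) count_map card_count.
Qed.

Lemma ldeg_le n (E : rel 'I_n) x : ldeg E x <= n.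
Proof. by rewrite -[n in _ <= n]card_ord max_card. Qed.

Lemma ldeg_lcompl n (E : rel 'I_n) x : ldeg (lcompl E) x = n - ldeg E x.
Proof.
have := cardC [pred y | E x y]; rewrite card_ord /ldeg => card_n.
rewrite -[X in _ = X - _]card_n addKn.
by apply: eq_card => y; rewrite !inE.
Qed.

Lemma degseq_iota n (E : rel 'I_n) a : antiregular E ->
  (forall x, a <= ldeg E x < a + n) -> degseq E = iota a n.
Proof.
move=> E_antireg E_range.
have E_perm : perm_eq [seq ldeg E x | x <- enum 'I_n] (iota a n).
  by rewrite -[n in iota _ n]card_ord; apply: perm_eq_injective_iota; rewrite ?card_ord.
rewrite /degseq -(sorted_sort leq_trans (iota_sorted a n)).
by apply/perm_sortP => //; [exact: leq_total | exact: leq_trans | exact: anti_leq].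
Qed.

Lemma liso_ldeg n (E1 E2 : rel 'I_n) f : bijective f ->
  (forall x y, E1 x y = E2 (f x) (f y)) -> forall x, ldeg E1 x = ldeg E2 (f x).
Proof.
move=> f_bij f_edge x; rewrite /ldeg.
have -> : #|[pred y | E1 x y]| = #|f @^-1: [set z | E2 (f x) z]|.
  by apply: eq_card => y; rewrite !inE f_edge.
rewrite card_preimset; last exact: bij_inj.
by apply: eq_card => y; rewrite !inE.
Qed.

Lemma liso_ldeg_codom n (E1 E2 : rel 'I_n) : liso E1 E2 ->
  forall y, exists x, ldeg E1 x = ldeg E2 y.
Proof.
move=> [f [f_bij f_edge]] y; have [g fK gK] := f_bij.
by exists (g y); rewrite (liso_ldeg f_bij f_edge) gK.
Qed.

Lemma liso_antiregular n (E1 E2 : rel 'I_n) :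
  liso E1 E2 -> antiregular E1 -> antiregular E2.
Proof.
move=> [f [f_bij f_edge]] E1_antireg u v; have [g fK gK] := f_bij.
by rewrite -(gK u) -(gK v) -!(liso_ldeg f_bij f_edge) => /E1_antireg ->.
Qed.

Lemma liso_lcompl_l n (E1 E2 : rel 'I_n) : liso (lcompl E1) E2 -> liso E1 (lcompl E2).
Proof. by move=> [f [f_bij f_edge]]; exists f; split => // x y; rewrite /lcompl -f_edge negbK. Qed.

Section AntiregularAdjacency.

Variables (n : nat) (E : rel 'I_n).
Hypotheses (E_sym : symmetric E) (E_antireg : antiregular E)
  (ldeg_gt0 : forall x, 0 < ldeg E x).
Local Notation d := (ldeg E).

Lemma card_ldeg_sum_gt x : #|[pred y | n < d x + d y]| = d x.
Proof.
have d_le := ldeg_le E x.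
rewrite (@eq_card _ _ [pred y | n - d x < d y]) => [|y]; last by rewrite !inE; lia.
by rewrite card_gt_injective // card_ord ?subKn // => y; rewrite ldeg_gt0 ldeg_le.
Qed.

(* Ranks the degrees n, 1, n-1, 2, ... as 0, 1, 2, 3, ...: the peeling order. *)
Let peel_rank x := minn (2 * (n - d x)) (2 * d x - 1).

Lemma adjacency_peel_step x :
  (forall z, peel_rank z < peel_rank x -> forall y, E z y = (n < d z + d y)) ->
  forall y, E x y = (n < d x + d y).
Proof.
move=> IH y; have d_le := ldeg_le E x; have d_gt0 := ldeg_gt0 x.
have card_eq : #|[pred y | E x y]| = #|[pred y | n < d x + d y]|.
  by rewrite card_ldeg_sum_gt.
(* Both sets have d x elements, so one inclusion suffices; a vertex z violating
   it lies earlier in the peeling order, and the rule for z, read at x,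
   contradicts the violation. *)
have [top | bottom] := leqP (n - d x) (d x - 1).
- suff /(subset_cardP card_eq) /(_ y) : [pred y | E x y] \subset [pred y | n < d x + d y].
    by rewrite !inE.
  apply/subsetP => z; rewrite !inE => Exz; rewrite ltnNge; apply/negP => small.
  have rank_lt : peel_rank z < peel_rank x by have := ldeg_gt0 z; rewrite /peel_rank; lia.
  by have := IH z rank_lt x; rewrite -E_sym Exz; lia.
- suff /(subset_cardP (esym card_eq)) /(_ y) : [pred y | n < d x + d y] \subset [pred y | E x y].
    by rewrite !inE.
  apply/subsetP => z; rewrite !inE => large.
  have rank_lt : peel_rank z < peel_rank x.
    by have := ldeg_gt0 z; have := ldeg_le E z; rewrite /peel_rank; lia.
  by rewrite E_sym (IH z rank_lt x) addnC.
Qed.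

Lemma antiregular_adjacency x y : E x y = (n < d x + d y).
Proof.
move: {2}(peel_rank x) (erefl (peel_rank x)) => k.
elim/ltn_ind: k x y => k IH x y rank_x.
by apply: adjacency_peel_step => z; rewrite rank_x => /IH adj_z w; apply: adj_z.
Qed.

End AntiregularAdjacency.

Definition antireg_graph n : rel 'I_n := fun x y => n < x.+1 + y.+1.
Arguments antireg_graph : clear implicits.

Lemma antireg_graph_sym n : symmetric (antireg_graph n).
Proof. by move=> x y; rewrite /antireg_graph addnC. Qed.

Lemma ldeg_antireg_graph n (x : 'I_n) : ldeg (antireg_graph n) x = x.+1.
Proof.
have x_lt := ltn_ord x.
rewrite /ldeg (@eq_card _ _ [pred y : 'I_n | n - x.+1 < y.+1]) => [|y]; last first.
  by rewrite !inE /antireg_graph; lia.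
rewrite card_gt_injective ?card_ord; first lia.
- by move=> y z [/val_inj].
- by move=> y; rewrite ltn_ord.
Qed.

Lemma ldeg_antireg_graphC n (x : 'I_n) : ldeg (lcompl (antireg_graph n)) x = n - x.+1.
Proof. by rewrite ldeg_lcompl ldeg_antireg_graph. Qed.

Lemma antireg_graph_antiregular n : antiregular (antireg_graph n).
Proof. by move=> x y; rewrite !ldeg_antireg_graph => -[/val_inj]. Qed.

Lemma antireg_graphC_antiregular n : antiregular (lcompl (antireg_graph n)).
Proof.
move=> x y; rewrite !ldeg_antireg_graphC => eq_deg; apply: ord_inj.
by have := ltn_ord x; have := ltn_ord y; lia.
Qed.

Lemma liso_antireg_graph n (E : rel 'I_n) : symmetric E -> antiregular E ->
  (forall x, 0 < ldeg E x) -> liso E (antireg_graph n).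
Proof.
move=> E_sym E_antireg ldeg_gt0.
have ldeg_pred_lt x : (ldeg E x).-1 < n by have := ldeg_le E x; have := ldeg_gt0 x; lia.
exists (fun x => Ordinal (ldeg_pred_lt x)); split.
  apply: injF_bij => x y /(congr1 val) /= eq_deg; apply: E_antireg.
  by have := ldeg_gt0 x; have := ldeg_gt0 y; lia.
move=> x y; rewrite (antiregular_adjacency E_sym E_antireg ldeg_gt0) /antireg_graph /=.
by have := ldeg_gt0 x; have := ldeg_gt0 y; lia.
Qed.

Lemma antiregular_ldeg_lt n (E : rel 'I_n) (x0 : 'I_n) : symmetric E ->
  ldeg E x0 = 0 -> forall x, ldeg E x < n.
Proof.
move=> E_sym deg_x0 x.
have no_edge_x0 y : E x0 y = false by have := card0_eq deg_x0 y; rewrite !inE.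
have : ldeg E x <= #|predC1 x0|.
  apply/subset_leq_card/subsetP => y; rewrite !inE.
  by apply: contraTneq => ->; rewrite E_sym no_edge_x0.
by rewrite cardC1 card_ord -subn1; have := ltn_ord x0; lia.
Qed.

Lemma antiregular_classification n (E : rel 'I_n) : symmetric E -> antiregular E ->
  liso E (antireg_graph n) \/ liso E (lcompl (antireg_graph n)).
Proof.
move=> E_sym E_antireg.
have [/existsP [x0 /eqP deg_x0] | /existsPn ldeg_gt0] := boolP [exists x, ldeg E x == 0].
  right; apply: liso_lcompl_l; apply: liso_antireg_graph.
  - by move=> x y; rewrite /lcompl E_sym.
  - move=> x y; rewrite !ldeg_lcompl => eq_deg; apply: E_antireg.
    by have := ldeg_le E x; have := ldeg_le E y; lia.
  - by move=> x; rewrite ldeg_lcompl subn_gt0 (antiregular_ldeg_lt E_sym deg_x0).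
by left; apply: liso_antireg_graph => // x; rewrite lt0n ldeg_gt0.
Qed.

Lemma antireg_graph_connected n : lconnected (antireg_graph n).
Proof.
move=> x y; have top_lt : n.-1 < n by have := ltn_ord x; lia.
apply: (@connect_trans _ _ (Ordinal top_lt)); apply: connect1;
  by rewrite /antireg_graph /=; have := ltn_ord x; have := ltn_ord y; lia.
Qed.

Lemma antireg_graphC_disconnected n : 1 < n -> ~ lconnected (lcompl (antireg_graph n)).
Proof.
move=> n_gt1 H_conn.
have top_lt : n.-1 < n by lia.
have bot_lt : 0 < n by lia.
case/connectP: (H_conn (Ordinal top_lt) (Ordinal bot_lt)) => -[|z p] /=.
  by move=> _ /(congr1 val) /=; lia.
by rewrite /lcompl /antireg_graph /=; have := ltn_ord z; lia.
Qed.

Lemma thr_alternating n (b : n.-tuple bool) : antiregular (thr b) -> alternating b.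
Proof.
move=> b_antireg i; rewrite size_tuple => lt_i; apply/negP => /eqP eq_bits.
pose i0 : 'I_n := Ordinal (ltnW lt_i); pose i1 : 'I_n := Ordinal lt_i.
suff /b_antireg /(congr1 val) : ldeg (thr b) i0 = ldeg (thr b) i1 by rewrite /=; lia.
apply: eq_card => y; rewrite !inE /thr !(tnth_nth false) /=.
case: (leqP i y) => [le_iy | lt_yi]; case: (leqP i.+1 y) => [le_Siy | lt_ySi] //.
- by have -> : nat_of_ord y = i by lia.
- lia.
Qed.

Lemma last_tuple_tnth n (b : n.-tuple bool) (i : 'I_n) :
  i = n.-1 :> nat -> last false b = tnth b i.
Proof. by move=> i_top; rewrite (tnth_nth false) -nth_last size_tuple i_top. Qed.

Lemma ldeg_thr_last n (b : n.-tuple bool) (i : 'I_n) :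
  i = n.-1 :> nat -> ldeg (thr b) i = if last false b then n else 0.
Proof.
move=> i_top; rewrite (last_tuple_tnth b i_top).
have thr_top y : thr b i y = tnth b i.
  rewrite /thr; case: (leqP i y) => // le_iy.
  by have -> : y = i by apply: ord_inj; have := ltn_ord y; lia.
rewrite /ldeg; case b_top: (tnth b i).
  by rewrite -[RHS](card_ord n); apply: eq_card => y; rewrite !inE thr_top b_top.
by apply: eq_card0 => y; rewrite !inE thr_top b_top.
Qed.

Lemma alternating_nth s k : alternating s -> k < size s ->
  nth false s ((size s).-1 - k) = odd k (+) last false s.
Proof.
move=> s_alt; elim: k => [|k IHk] lt_k; first by rewrite subn0 nth_last.
have lt_next : ((size s).-1 - k.+1).+1 < size s by lia.
have := s_alt _ lt_next.
have -> : ((size s).-1 - k.+1).+1 = (size s).-1 - k by lia.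
rewrite IHk /=; last lia.
by case: (nth _ _ _); case: (odd k); case: (last _ _).
Qed.

Lemma alternating_eq s t : alternating s -> alternating t ->
  size s = size t -> last false s = last false t -> s = t.
Proof.
move=> s_alt t_alt eq_size eq_last; apply: (@eq_from_nth _ false) => // i lt_i.
have rev_lt : (size s).-1 - i < size s by lia.
have -> : i = (size s).-1 - ((size s).-1 - i) by lia.
rewrite (alternating_nth s_alt rev_lt) eq_size (alternating_nth t_alt) -?eq_size //.
by rewrite eq_last.
Qed.

Lemma last_map_negb s : 0 < size s -> last false (map negb s) = ~~ last false s.
Proof. by case: s => // x s _; rewrite /= last_map. Qed.

Lemma alternating_map_negb s : alternating s -> alternating (map negb s).
Proof.
move=> s_alt i; rewrite size_map => lt_i.
rewrite (nth_map false) ?(ltnW lt_i) // (nth_map false) //.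
by case: (nth _ s i) (s_alt i lt_i); case: (nth _ s i.+1).
Qed.

(* Vertex x of [antireg_graph n] is created at step [creation_step n x]:
   read backwards, the creation sequence adds the dominating vertex n-1, then
   vertex 0 (adjacent to it alone), then n-2, then 1, and so on. *)
Definition creation_step n x := if n <= 2 * x + 1 then 2 * x + 1 - n else n - 2 - 2 * x.

Lemma odd_sub_creation_step n x : x < n -> odd (n - creation_step n x) = (n <= 2 * x + 1).
Proof.
rewrite /creation_step; case: ifP => top lt_x.
  have -> : n - (2 * x + 1 - n) = (2 * (n - x - 1)).+1 by lia.
  by rewrite /= oddM.
have -> : n - (n - 2 - 2 * x) = 2 * x.+1 by lia.
by rewrite oddM.
Qed.

Definition antireg_bits n : n.-tuple bool := [tuple odd (n - i) | i < n].

Lemma nth_antireg_bits n i : i < n -> nth false (antireg_bits n) i = odd (n - i).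
Proof. by move=> lt_i; rewrite -(tnth_nth false _ (Ordinal lt_i)) tnth_mktuple. Qed.

Lemma last_antireg_bits n : 0 < n -> last false (antireg_bits n) = true.
Proof.
move=> n_gt0; rewrite -nth_last size_tuple nth_antireg_bits ?ltn_predL //.
by have -> : n - n.-1 = 1 by lia.
Qed.

Lemma liso_antireg_graph_thr n : liso (antireg_graph n) (thr (antireg_bits n)).
Proof.
have step_lt (x : 'I_n) : creation_step n x < n.
  by rewrite /creation_step; have := ltn_ord x; case: ifP; lia.
exists (fun x => Ordinal (step_lt x)); split.
  apply: injF_bij => x y /(congr1 val) /=; rewrite /creation_step => eq_step.
  by apply: ord_inj; move: eq_step; have := ltn_ord x; have := ltn_ord y; do 2 case: ifP; lia.
move=> x y; rewrite /antireg_graph /thr !tnth_mktuple /=.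
have := ltn_ord x; have := ltn_ord y.
case: ifP; rewrite odd_sub_creation_step // /creation_step;
  by do 2 case: ifP; move=> *; apply/idP/idP; lia.
Qed.

Lemma liso_antireg_graphC_thr n :
  liso (lcompl (antireg_graph n)) (thr (map_tuple negb (antireg_bits n))).
Proof.
have [f [f_bij f_edge]] := liso_antireg_graph_thr n.
by exists f; split => // x y; rewrite /lcompl f_edge /thr (tnth_map negb).
Qed.

Lemma antireg_bits_alternating n : alternating (antireg_bits n).
Proof.
apply: thr_alternating; apply: liso_antiregular (liso_antireg_graph_thr n) _.
exact: antireg_graph_antiregular.
Qed.

Lemma liso_thr_last_ldeg n (E : rel 'I_n) (b : n.-tuple bool) : 0 < n ->
  liso E (thr b) -> exists x, ldeg E x = if last false b then n else 0.
Proof.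
rewrite -ltn_predL => top_lt /liso_ldeg_codom /(_ (Ordinal top_lt)) [x deg_x].
by exists x; rewrite deg_x (ldeg_thr_last b (i := Ordinal top_lt)).
Qed.

Lemma thr_bits_antireg_graph n (b : n.-tuple bool) : 0 < n ->
  liso (antireg_graph n) (thr b) -> b = antireg_bits n.
Proof.
move=> n_gt0 b_iso; apply: val_inj; apply: alternating_eq.
- exact/thr_alternating/(liso_antiregular b_iso)/antireg_graph_antiregular.
- exact: antireg_bits_alternating.
- by rewrite !size_tuple.
have [x] := liso_thr_last_ldeg n_gt0 b_iso; rewrite ldeg_antireg_graph last_antireg_bits //.
by case: (last _ _).
Qed.

Lemma thr_bits_antireg_graphC n (b : n.-tuple bool) : 0 < n ->
  liso (lcompl (antireg_graph n)) (thr b) -> b = map_tuple negb (antireg_bits n).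
Proof.
move=> n_gt0 b_iso; apply: val_inj; apply: alternating_eq.
- exact/thr_alternating/(liso_antiregular b_iso)/antireg_graphC_antiregular.
- exact/alternating_map_negb/antireg_bits_alternating.
- by rewrite size_map !size_tuple.
have [x] := liso_thr_last_ldeg n_gt0 b_iso.
have -> : val (map_tuple negb (antireg_bits n)) = map negb (antireg_bits n) by [].
rewrite ldeg_antireg_graphC last_map_negb ?size_tuple // last_antireg_bits //.
by case: (last _ _) => //; have := ltn_ord x; lia.
Qed.

Theorem mainTheorem2 (n : nat) (hn : 1 <= n) :
  exists G H : rel 'I_n,
    [/\ (* (i) exactly two anti-regular graphs with loops up to isomorphism *)
        [/\ symmetric G, symmetric H, antiregular G, antiregular H
          & ~ liso G H],
        (forall E : rel 'I_n, symmetric E -> antiregular E -> liso E G \/ liso E H),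
        (* (ii) complements; G connected, H disconnected *)
        [/\ H = lcompl G, lconnected G & (1 < n -> ~ lconnected H)],
        (* (iii) degree sequences *)
        degseq G = iota 1 n /\ degseq H = iota 0 n
      & (* (iv)-(vi) threshold with loops; binary sequences *)
        [/\ (exists bG : n.-tuple bool, liso G (thr bG)),
            (exists bH : n.-tuple bool, liso H (thr bH)),
            (forall bG : n.-tuple bool, liso G (thr bG) ->
               alternating bG /\ head false bG = odd n),
            (forall bH : n.-tuple bool, liso H (thr bH) ->
               alternating bH /\ head false bH = odd n.+1)
          & (forall bG bH : n.-tuple bool, liso G (thr bG) -> liso H (thr bH) ->
               bH = map_tuple negb bG)]].
Proof.
have top_lt : n.-1 < n by lia.
have head_bits : head false (antireg_bits n) = odd n by rewrite -nth0 nth_antireg_bits ?subn0.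
exists (antireg_graph n), (lcompl (antireg_graph n)); split.
- split; [exact: antireg_graph_sym | by move=> x y; rewrite /lcompl antireg_graph_sym |
    exact: antireg_graph_antiregular | exact: antireg_graphC_antiregular | ].
  move=> /liso_ldeg_codom /(_ (Ordinal top_lt)) [x].
  by rewrite ldeg_antireg_graph ldeg_antireg_graphC /=; lia.
- exact: antiregular_classification.
- split; [by [] | exact: antireg_graph_connected | exact: antireg_graphC_disconnected].
- split; apply: degseq_iota;
    do ?[exact: antireg_graph_antiregular | exact: antireg_graphC_antiregular];
    move=> x; rewrite ?ldeg_antireg_graph ?ldeg_antireg_graphC; have := ltn_ord x; lia.
- split.
  + by exists (antireg_bits n); apply: liso_antireg_graph_thr.
  + by exists (map_tuple negb (antireg_bits n)); apply: liso_antireg_graphC_thr.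
  + move=> b /(thr_bits_antireg_graph hn) ->.
    by split; [exact: antireg_bits_alternating | exact: head_bits].
  + move=> b /(thr_bits_antireg_graphC hn) ->; split.
      exact/alternating_map_negb/antireg_bits_alternating.
    have -> : val (map_tuple negb (antireg_bits n)) = map negb (antireg_bits n) by [].
    by rewrite -nth0 (nth_map false) ?size_tuple // nth0 head_bits.
  + by move=> bG bH /(thr_bits_antireg_graph hn) -> /(thr_bits_antireg_graphC hn).
Qed.
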